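(* Let $\mathcal{V}$ be a finite set and $\theta\mapsto\boldsymbol{z}_\theta\in\mathbb{R}^{|\mathcal{V}|}$, $\theta\in\mathbb{R}^p$, a differentiable logit map; let $\pi_\theta(a)=\frac{\exp z_\theta(a)}{\sum_{a'}\exp z_\theta(a')}$. Fix behavioral logits $\boldsymbol{z}_{\text{old}}\in\mathbb{R}^{|\mathcal{V}|}$, an advantage vector $\boldsymbol{A}\in\mathbb{R}^{|\mathcal{V}|}$ and $\beta>0$, and set $\boldsymbol{z}^*=\boldsymbol{z}_{\text{old}}+\boldsymbol{A}/\beta$, $\pi^*(a)=\frac{\exp z^*(a)}{\sum_{a'}\exp z^*(a')}$. Define $$\mathcal{L}_{\text{LCO-MSE}}(\theta)=\frac{1}{|\mathcal{V}|}\sum_{a}(z_\theta(a)-z^*(a))^2,\quad \mathcal{L}_{\text{LCO-LCH}}(\theta)=\frac{1}{|\mathcal{V}|}\sum_{a}\log\cosh(z_\theta(a)-z^*(a)),\quad \mathcal{L}_{\text{LCO-KLD}}(\theta)=\sum_{a}\pi^*(a)\log\frac{\pi^*(a)}{\pi_\theta(a)}.$$ At a given $\theta$, let $\sigma_{\max}$ be the largest singular value of the Jacobian $\partial\boldsymbol{z}_\theta/\partial\theta\in\mathbb{R}^{|\mathcal{V}|\times p}$. Then, with Euclidean norms, $$\|\nabla_\theta\mathcal{L}_{\text{LCO-MSE}}\|\le\frac{2}{|\mathcal{V}|}\sigma_{\max}\sqrt{|\mathcal{V}|\,\mathcal{L}_{\text{LCO-MSE}}},\qquad \|\nabla_\theta\mathcal{L}_{\text{LCO-LCH}}\|\le\frac{1}{|\mathcal{V}|}\sigma_{\max}\sqrt{|\mathcal{V}|\bigl(1-\exp(-2\mathcal{L}_{\text{LCO-LCH}})\bigr)},$$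 $$\|\nabla_\theta\mathcal{L}_{\text{LCO-KLD}}\|\le\sigma_{\max}\sqrt{2\,\mathcal{L}_{\text{LCO-KLD}}},$$ where all losses and gradients are evaluated at $\theta$.
   Context: These are the single-time-step Logits Convex Optimization (LCO) objectives, which fit the policy's logits (or distribution) to the optimal target $\boldsymbol{z}^*$ (resp. $\pi^*$) derived from the KL-regularized advantage-maximization objective. *)

From HB Require Import structures.
From mathcomp Require Import all_boot all_order all_algebra.
From mathcomp Require Import all_classical all_reals all_analysis.
Set Implicit Arguments. Unset Strict Implicit. Unset Printing Implicit Defensive.
Import Order.TTheory GRing.Theory Num.Theory.
Import numFieldNormedType.Exports.
Local Open Scope ring_scope.
Local Open Scope classical_set_scope.

Section LCO.
Context {R : realType}.

Definition euclid_norm k (v : 'rV[R]_k) : R := Num.sqrt (\sum_(j < k) v 0 j ^+ 2).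

Definition grad p (L : 'rV[R]_p -> R) (th : 'rV[R]_p) : 'rV[R]_p :=
  \row_(j < p) ('D_(delta_mx 0 j) L th : R).

(* Largest singular value of a real matrix A: the largest s >= 0 such that
   s^2 is an eigenvalue of A^T A (0 if there is none, e.g. empty matrices). *)
Definition sigma_max m k (A : 'M[R]_(m, k)) : R :=
  sup [set s : R | 0 <= s /\ eigenvalue (A^T *m A) (s ^+ 2)].

Definition softmax n (z : 'rV[R]_n) (a : 'I_n) : R :=
  expR (z 0 a) / \sum_(b < n) expR (z 0 b).

Definition logcosh (x : R) : R := ln ((expR x + expR (- x)) / 2).

Definition zstar n (zold A : 'rV[R]_n) (beta : R) : 'rV[R]_n := zold + beta^-1 *: A.

Definition L_MSE p n (z : 'rV[R]_p -> 'rV[R]_n) (zs : 'rV[R]_n) (th : 'rV[R]_p) : R :=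
  n%:R^-1 * \sum_(a < n) (z th 0 a - zs 0 a) ^+ 2.

Definition L_LCH p n (z : 'rV[R]_p -> 'rV[R]_n) (zs : 'rV[R]_n) (th : 'rV[R]_p) : R :=
  n%:R^-1 * \sum_(a < n) logcosh (z th 0 a - zs 0 a).

Definition L_KLD p n (z : 'rV[R]_p -> 'rV[R]_n) (zs : 'rV[R]_n) (th : 'rV[R]_p) : R :=
  \sum_(a < n) softmax zs a * ln (softmax zs a / softmax (z th) a).

End LCO.

(* The gradient of each loss factors through the logits: [grad L = g *m J^T],
   where [J] is the Jacobian of the logit map and [g] the gradient of the loss
   in the logits.  The maximum of [|x J^T|^2] on the unit sphere exists by
   compactness and is attained at an eigenvector of [J^T J], so it is at most
   [sigma_max^2] and [|g J^T| <= sigma_max |g|].  It remains to bound [|g|]: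
   - MSE: [g = 2 (z - zs) / n], whose norm is exactly [2/n sqrt (n L)];
   - log-cosh: [g = tanh (z - zs) / n] and [tanh^2 = 1 - exp (-2 logcosh)];
     Jensen's inequality for [exp] bounds the mean of [exp (-2 logcosh)]
     from below by [exp (-2 L)];
   - KL: [g = softmax z - softmax zs], and the coordinatewise inequality
     [(a - b)^2 / 2 <= a ln (a / b) - a + b] on [(0, 1]] sums to
     [|g|^2 <= 2 KL]. *)

From HB Require Import structures.
From mathcomp Require Import all_boot all_order all_algebra.
From mathcomp Require Import all_classical all_reals all_analysis.
From mathcomp Require Import ring lra.
Import Order.TTheory GRing.Theory Num.Theory.
Import numFieldNormedType.Exports.
Set Implicit Arguments. Unset Strict Implicit. Unset Printing Implicit Defensive.
Local Open Scope ring_scope.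

Section SquaredNorm.
Context {R : realType}.

Definition sqnorm k (x : 'rV[R]_k) : R := \sum_(i < k) x 0 i ^+ 2.

Definition qform k (B : 'M[R]_k) (x : 'rV[R]_k) : R := (x *m B *m x^T) 0 0.

Lemma euclid_normE k (x : 'rV[R]_k) : euclid_norm x = Num.sqrt (sqnorm x).
Proof. by []. Qed.

Lemma sqnormE k (x : 'rV[R]_k) : sqnorm x = (x *m x^T) 0 0.
Proof. by rewrite mxE; apply: eq_bigr => i _; rewrite !mxE expr2. Qed.

Lemma sqnorm_ge0 k (x : 'rV[R]_k) : 0 <= sqnorm x.
Proof. by apply: sumr_ge0 => i _; exact: sqr_ge0. Qed.

Lemma sqnorm_eq0 k (x : 'rV[R]_k) : (sqnorm x == 0) = (x == 0).
Proof.
apply/eqP/eqP => [x0|->]; last by rewrite /sqnorm big1 // => i _; rewrite mxE expr0n.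
apply/rowP => i; rewrite mxE; apply/eqP; rewrite -sqrf_eq0; apply/eqP.
exact: (psumr_eq0P (fun i _ => sqr_ge0 (x 0 i)) x0).
Qed.

Lemma sqnorm0 k : sqnorm (0 : 'rV[R]_k) = 0.
Proof. by apply/eqP; rewrite sqnorm_eq0. Qed.

Lemma sqnormZ k c (x : 'rV[R]_k) : sqnorm (c *: x) = c ^+ 2 * sqnorm x.
Proof. by rewrite /sqnorm mulr_sumr; apply: eq_bigr => i _; rewrite mxE exprMn. Qed.

Lemma euclid_normZ k c (x : 'rV[R]_k) : euclid_norm (c *: x) = `|c| * euclid_norm x.
Proof. by rewrite !euclid_normE sqnormZ sqrtrM ?sqr_ge0 // sqrtr_sqr. Qed.

Lemma sqnorm_coord_le k (x : 'rV[R]_k) i : x 0 i ^+ 2 <= sqnorm x.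
Proof. by rewrite /sqnorm (bigD1 i) //= lerDl sumr_ge0 // => j _; exact: sqr_ge0. Qed.

Lemma sqnorm_mulmx_tr m k (A : 'M[R]_(m, k)) (x : 'rV[R]_k) :
  sqnorm (x *m A^T) = qform (A^T *m A) x.
Proof. by rewrite sqnormE /qform trmx_mul trmxK !mulmxA. Qed.

(* [qform B (u + t *: u *m B)] is [2 t |u B|^2 + O(t^2)], which is negative for
   small [t < 0] unless [u *m B = 0]. *)
Lemma psd_qform_eq0 k (B : 'M[R]_k) (u : 'rV[R]_k) :
  B^T = B -> (forall x, 0 <= qform B x) -> qform B u = 0 -> u *m B = 0.
Proof.
move=> BT psd Bu0; set w := u *m B.
have expand t : qform B (u + t *: w) = 2 * t * sqnorm w + t ^+ 2 * qform B w.
  have wBu : (w *m B *m u^T) 0 0 = sqnorm w.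
    have tr11 (X : 'M[R]_1) : X^T 0 0 = X 0 0 by rewrite mxE.
    by rewrite sqnormE -tr11 !trmx_mul trmxK BT !mulmxA.
  rewrite /qform linearD /= linearZ /= !(mulmxDl, mulmxDr) -!scalemxAl -!scalemxAr.
  have mxD (X Y : 'M[R]_1) : (X + Y) 0 0 = X 0 0 + Y 0 0 by rewrite mxE.
  have mxZ c (X : 'M[R]_1) : (c *: X) 0 0 = c * X 0 0 by rewrite mxE.
  rewrite !scalerA !mxD !mxZ -/(qform B u) Bu0 wBu -sqnormE /qform; ring.
have w0 : sqnorm w = 0.
  apply/eqP; rewrite eq_le sqnorm_ge0 andbT leNgt; apply/negP => w_gt0.
  set c := sqnorm w in w_gt0 expand; set d := qform B w in expand.
  have d1_gt0 : 0 < `|d| + 1 by rewrite ltr_pwDr // normr_ge0.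
  have := psd (u + (- c / (`|d| + 1)) *: w); rewrite expand.
  have -> : 2 * (- c / (`|d| + 1)) * c + (- c / (`|d| + 1)) ^+ 2 * d
      = (c / (`|d| + 1)) ^+ 2 * (d - 2 * (`|d| + 1)) by field; rewrite gt_eqF.
  rewrite pmulr_rge0 ?exprn_gt0 ?divr_gt0 // subr_ge0.
  have := ler_norm d; have := normr_ge0 d; lra.
by apply/eqP; rewrite -sqnorm_eq0 w0.
Qed.

End SquaredNorm.

Section SigmaMax.
Context {R : realType}.
Local Open Scope classical_set_scope.

Lemma continuous_sqnorm_mulmx k m (C : 'M[R]_(k, m)) :
  continuous (fun x : 'rV[R]_k => sqnorm (x *m C)).
Proof.
apply: continuous_big => [|j _]; first exact: add_continuous.
have entry_cont : continuous (fun x : 'rV[R]_k => (x *m C) 0 j).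
  under eq_fun do rewrite mxE.
  apply: continuous_big => [|i _ x]; first exact: add_continuous.
  by apply: continuousM; [exact: coord_continuous | exact: cst_continuous].
by move=> x; apply: (continuousM (entry_cont x) (entry_cont x)).
Qed.

Lemma unit_sphere_argmax k m (C : 'M[R]_(k, m)) : (0 < k)%N ->
  exists2 u : 'rV[R]_k, sqnorm u = 1 &
    forall x, sqnorm x = 1 -> sqnorm (x *m C) <= sqnorm (u *m C).
Proof.
move=> k_gt0; pose S := [set x : 'rV[R]_k | sqnorm x = 1].
have S0 : S !=set0.
  exists (delta_mx 0 (Ordinal k_gt0)).
  rewrite /S /= /sqnorm (bigD1 (Ordinal k_gt0)) //=.
  rewrite big1 => [|j /negbTE jn]; first by rewrite !mxE !eqxx expr1n addr0.
  by rewrite !mxE eqxx jn expr0n.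
have S_compact : compact S.
  apply: (subclosed_compact _ (@rV_compact _ _ (fun _ => `[(-1 : R), 1]) _)).
  - apply: (@preimage_closed _ _ (@sqnorm R k) [set 1]); last exact: closed_eq.
    move=> x _.
    by have := @continuous_sqnorm_mulmx k k 1%:M x; under eq_fun do rewrite mulmx1.
  - by move=> i; exact: segment_compact.
  - move=> x /= Sx i; rewrite /= in_itv /=.
    have := sqnorm_coord_le x i; rewrite Sx => h.
    by apply/andP; split; nra.
have [u Su umax] := compact_EVT_max S0 S_compact
  (continuous_subspaceT (@continuous_sqnorm_mulmx k m C)).
by exists u => [|x Sx]; [move: Su; rewrite inE | apply: umax; rewrite inE].
Qed.

Lemma qform_scalar_sub k (lam : R) (M : 'M[R]_k) x :
  qform (lam%:M - M) x = lam * sqnorm x - qform M x.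
Proof.
rewrite /qform mulmxBr mul_mx_scalar mulmxBl -scalemxAl sqnormE.
by rewrite [LHS]mxE; congr (_ + _); rewrite mxE.
Qed.

Lemma top_eigenpair m k (A : 'M[R]_(m, k)) : (0 < k)%N ->
  exists lam (u : 'rV[R]_k), [/\ u != 0, u *m (A^T *m A) = lam *: u &
    forall x, sqnorm (x *m A^T) <= lam * sqnorm x].
Proof.
move=> k_gt0; have [u u1 umax] := unit_sphere_argmax A^T k_gt0.
set lam := sqnorm (u *m A^T).
have u_neq0 : u != 0 by rewrite -sqnorm_eq0 u1 oner_neq0.
have lam_max x : sqnorm (x *m A^T) <= lam * sqnorm x.
  have [x0|x_neq0] := eqVneq x 0.
    by rewrite x0 mul0mx !sqnorm0 mulr0.
  have x_gt0 : 0 < sqnorm x by rewrite lt_def sqnorm_eq0 x_neq0 sqnorm_ge0.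
  pose c := (Num.sqrt (sqnorm x))^-1.
  have c2 : c ^+ 2 = (sqnorm x)^-1 by rewrite exprVn sqr_sqrtr ?sqnorm_ge0.
  have := umax (c *: x).
  rewrite -scalemxAl !sqnormZ c2 (mulVf (lt0r_neq0 x_gt0)) // => /(_ erefl).
  by rewrite -(ler_pM2l x_gt0) mulrA (mulfV (lt0r_neq0 x_gt0)) mul1r mulrC.
exists lam, u; split=> //.
have BT : (lam%:M - A^T *m A)^T = lam%:M - A^T *m A.
  by rewrite linearB /= tr_scalar_mx trmx_mul trmxK.
have psdB x : 0 <= qform (lam%:M - A^T *m A) x.
  by rewrite qform_scalar_sub -sqnorm_mulmx_tr subr_ge0.
have /eqP : u *m (lam%:M - A^T *m A) = 0.
  apply: psd_qform_eq0 BT psdB _.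
  by rewrite qform_scalar_sub -sqnorm_mulmx_tr u1 mulr1 subrr.
by rewrite mulmxBr mul_mx_scalar subr_eq0 => /eqP <-.
Qed.

Lemma sigma_max_ge0 m k (A : 'M[R]_(m, k)) : 0 <= sigma_max A.
Proof.
rewrite /sigma_max; set S := [set s | _].
have [S_sup|S_nosup] := pselect (has_sup S); last by rewrite sup_out.
have [[s [s_ge0 Ss]] _] := S_sup.
exact: le_trans s_ge0 (sup_upper_bound S_sup (conj s_ge0 Ss)).
Qed.

Lemma euclid_norm_mulmx_tr_le m k (A : 'M[R]_(m, k)) (g : 'rV[R]_k) :
  euclid_norm (g *m A^T) <= sigma_max A * euclid_norm g.
Proof.
have [k0|k_gt0] := posnP k.
  have -> : g = 0 by apply/rowP => i; have := ltn_ord i; rewrite {2}k0.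
  by rewrite mul0mx !euclid_normE !sqnorm0 sqrtr0 mulr0.
have [lam [u [u_neq0 u_eigen lam_max]]] := top_eigenpair A k_gt0.
have u_gt0 : 0 < sqnorm u by rewrite lt_def sqnorm_eq0 u_neq0 sqnorm_ge0.
have lam_ge0 : 0 <= lam.
  by rewrite -(pmulr_lge0 _ u_gt0); apply: le_trans (lam_max u); exact: sqnorm_ge0.
set S := [set s | 0 <= s /\ eigenvalue (A^T *m A) (s ^+ 2)].
have S_lam : S (Num.sqrt lam).
  split; first exact: sqrtr_ge0.
  by rewrite sqr_sqrtr //; apply/eigenvalueP; exists u.
have S_ub : ubound S (Num.sqrt lam).
  move=> s [s_ge0 /eigenvalueP [v v_eigen v_neq0]].
  have v_gt0 : 0 < sqnorm v by rewrite lt_def sqnorm_eq0 v_neq0 sqnorm_ge0.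
  have : s ^+ 2 * sqnorm v <= lam * sqnorm v.
    apply: le_trans (lam_max v).
    rewrite sqnorm_mulmx_tr /qform v_eigen -scalemxAl sqnormE.
    by rewrite [leRHS]mxE.
  by rewrite ler_pM2r // -ler_sqrt ?sqr_ge0 // sqrtr_sqr ger0_norm.
have sqrt_lam_le : Num.sqrt lam <= sigma_max A.
  apply: sup_upper_bound => //.
  by split; [exists (Num.sqrt lam) | exists (Num.sqrt lam)].
rewrite !euclid_normE.
apply: le_trans (ler_wpM2r (sqrtr_ge0 _) sqrt_lam_le).
by rewrite -sqrtrM // ler_sqrt ?mulr_ge0 ?sqnorm_ge0.
Qed.

End SigmaMax.

Section ChainRule.
Context {R : realType} {V : normedModType R}.

Lemma derive_line (f : V -> R) x v :
  'D_v f x = 'D_1 (fun h : R => f (h *: v + x)) 0.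
Proof.
rewrite /derive /=.
suff -> : (fun h : R => h^-1 *: (f ((h *: (1 : R) + 0) *: v + x) - f (0 *: v + x)))
  = (fun h : R => h^-1 *: (f (h *: v + x) - f x)) by [].
by apply: funext => h; rewrite scale0r add0r addr0 [_%:A]mulr1.
Qed.

Lemma is_derive_comp_real (f : V -> R) (g : R -> R) x v df dg :
  is_derive x v f df -> is_derive (f x) 1 g dg ->
  is_derive x v (g \o f) (dg * df).
Proof.
move=> [f_der f_val] [g_der g_val].
pose l h := f (h *: v + x).
have l0 : l 0 = f x by rewrite /l scale0r add0r.
have l_der : derivable l 0 1 by move/derivable1P: f_der.
have g_der_l0 : derivable g (l 0) 1 by rewrite l0.
have gl_diff : differentiable (g \o l) 0.
  by apply: differentiable_comp; exact/derivable1_diffP.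
apply: DeriveDef; first by apply/derivable1P/derivable1_diffP.
rewrite derive_line -[LHS]derive1E.
have -> := derive1_comp l_der g_der_l0.
by rewrite !derive1E l0 g_val -derive_line f_val.
Qed.

Lemma is_derive_expR_comp (f : V -> R) x v df : is_derive x v f df ->
  is_derive x v (fun y => expR (f y)) (expR (f x) * df).
Proof. by move=> f_der; apply: is_derive_comp_real. Qed.

Lemma is_derive_ln_comp (f : V -> R) x v df : is_derive x v f df -> 0 < f x ->
  is_derive x v (fun y => ln (f y)) ((f x)^-1 * df).
Proof.
by move=> f_der fx_gt0; apply: is_derive_comp_real => //; exact: is_derive1_ln.
Qed.

Lemma is_derive_sum_fun n (h : 'I_n -> V -> R) x v (dh : 'I_n -> R) :
  (forall i, is_derive x v (h i) (dh i)) ->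
  is_derive x v (fun y => \sum_(i < n) h i y) (\sum_(i < n) dh i).
Proof.
move=> h_der; have := is_derive_sum h_der.
by congr is_derive; apply: funext => y; rewrite fct_sumE.
Qed.

End ChainRule.

Section LogitGradient.
Context {R : realType} {p n : nat} (z : 'rV[R]_p -> 'rV[R]_n) (th : 'rV[R]_p).
Hypothesis z_diff : differentiable z th.

Lemma is_derive_logit v a : is_derive th v (fun y => z y 0 a) ((v *m 'J z th) 0 a).
Proof.
apply: DeriveDef.
  by move/derivable_mxP: (@diff_derivable _ _ _ z th v z_diff); apply.
by rewrite -deriveEjacobian // derive_mx ?mxE //; exact: diff_derivable.
Qed.

Lemma grad_through_logits (L : 'rV[R]_p -> R) (g : 'rV[R]_n) :
  (forall v, is_derive th v L (\sum_(a < n) g 0 a * (v *m 'J z th) 0 a)) ->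
  grad L th = g *m ('J z th)^T.
Proof.
move=> L_der; apply/rowP => j; rewrite !mxE; have [_ ->] := L_der (delta_mx 0 j).
by apply: eq_bigr => a _; rewrite -rowE !mxE.
Qed.

Lemma euclid_norm_grad_le (L : 'rV[R]_p -> R) (g : 'rV[R]_n) c :
  grad L th = g *m ('J z th)^T -> euclid_norm g <= c ->
  euclid_norm (grad L th) <= sigma_max ('J z th) * c.
Proof.
move=> -> g_le; apply: le_trans (euclid_norm_mulmx_tr_le _ _) _.
by rewrite ler_wpM2l // sigma_max_ge0.
Qed.

End LogitGradient.

Section RealInequalities.
Context {R : realType}.

Lemma ln_le_subr1 (y : R) : 0 < y -> ln y <= y - 1.
Proof. by move=> y_gt0; have := @le_ln1Dx R (y - 1); rewrite subrKC; apply; lra. Qed.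

Lemma subr1V_le_ln (y : R) : 0 < y -> 1 - y^-1 <= ln y.
Proof.
move=> y_gt0; have := @ln_le_subr1 y^-1; rewrite invr_gt0 => /(_ y_gt0).
by rewrite lnV ?posrE //; lra.
Qed.

Definition kl_sqr_gap (b t : R) := t * ln (t / b) - t + b - (t - b) ^+ 2 / 2.

Lemma is_derive_kl_sqr_gap (b t : R) : 0 < b -> 0 < t ->
  is_derive t 1 (kl_sqr_gap b) (ln (t / b) - (t - b)).
Proof.
move=> b_gt0 t_gt0.
have div_der : is_derive t 1 (fun s : R => s / b) _ :=
  is_deriveM (is_derive_id t 1) (is_derive_cst (b^-1 : R) t 1).
have ln_der := is_derive_ln_comp div_der (divr_gt0 t_gt0 b_gt0).
have sq_der : is_derive t 1 (fun s : R => (s - b) ^+ 2 / 2) _ :=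
  is_deriveM (is_deriveX 2 (is_deriveB (is_derive_id t 1) (is_derive_cst b t 1)))
    (is_derive_cst (2^-1 : R) t 1).
apply: is_derive_eq (is_deriveB (is_deriveD (is_deriveB
  (is_deriveM (is_derive_id t 1) ln_der) (is_derive_id t 1))
  (is_derive_cst b t 1)) sq_der) _.
rewrite !scaler0 !(addr0, add0r) !fctE /= [_%:A]mulr1 [_%:A]mulr1 subr0 expr1.
by rewrite /GRing.scale /=; field; rewrite !gt_eqF.
Qed.

Lemma kl_sqr_gap_derive_sign (b t : R) : 0 < b <= 1 -> 0 < t <= 1 ->
  0 <= (t - b) * (ln (t / b) - (t - b)).
Proof.
move=> /andP[b_gt0 b_le1] /andP[t_gt0 t_le1].
have [t_le_b|b_lt_t] := leP t b.
  apply: mulr_le0; first by rewrite subr_le0.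
  have := ln_le_subr1 (divr_gt0 t_gt0 b_gt0).
  have -> : t / b - 1 = (t - b) + (t - b) * (b^-1 - 1) by field; rewrite gt_eqF.
  have : (t - b) * (b^-1 - 1) <= 0.
    by rewrite mulr_le0_ge0 ?subr_le0 // subr_ge0 invr_ge1 ?unitfE ?gt_eqF.
  lra.
apply: mulr_ge0; first by rewrite subr_ge0 ltW.
have := subr1V_le_ln (divr_gt0 t_gt0 b_gt0).
have -> : 1 - (t / b)^-1 = (t - b) + (t - b) * (t^-1 - 1) by field; rewrite !gt_eqF.
have : 0 <= (t - b) * (t^-1 - 1).
  by rewrite mulr_ge0 // subr_ge0 ?invr_ge1 ?unitfE ?gt_eqF // ltW.
lra.
Qed.

Lemma pinsker_term_le (a b : R) : 0 < a <= 1 -> 0 < b <= 1 ->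
  (a - b) ^+ 2 / 2 <= a * ln (a / b) - a + b.
Proof.
move=> a01 b01; have /andP[a_gt0 a_le1] := a01; have /andP[b_gt0 b_le1] := b01.
suff : kl_sqr_gap b b <= kl_sqr_gap b a.
  by rewrite /kl_sqr_gap divff ?gt_eqF // ln1 mulr0 subrr expr0n /=; lra.
have gap_der (t : R) : 0 < t -> derivable (kl_sqr_gap b) t 1.
  by move=> t_gt0; have [] := is_derive_kl_sqr_gap b_gt0 t_gt0.
have gap'E (t : R) : 0 < t -> (kl_sqr_gap b)^`()%classic t = ln (t / b) - (t - b).
  by move=> t_gt0; rewrite derive1E; have [_ ->] := is_derive_kl_sqr_gap b_gt0 t_gt0.
have gap_cont (x y : R) : 0 < x -> {within `[x, y], continuous (kl_sqr_gap b)}%classic.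
  move=> x_gt0; apply: derivable_within_continuous => t.
  by rewrite in_itv /= => /andP[xt _]; exact: gap_der (lt_le_trans x_gt0 xt).
have [a_le_b|b_lt_a] := leP a b.
- apply: (@ler0_derive1_le_cc _ _ a b _ _ (gap_cont a b a_gt0)) => [t|t|||];
    rewrite ?in_itv /= ?lexx ?a_le_b // => /andP[a_lt_t t_lt_b].
    exact: gap_der (lt_trans a_gt0 a_lt_t).
  have t_gt0 := lt_trans a_gt0 a_lt_t.
  have t01 : 0 < t <= 1 by rewrite t_gt0 (le_trans (ltW t_lt_b) b_le1).
  by have := kl_sqr_gap_derive_sign b01 t01; rewrite gap'E // nmulr_rge0 // subr_lt0.
- apply: (@ger0_derive1_le_cc _ _ b a _ _ (gap_cont b a b_gt0)) => [t|t|||];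
    rewrite ?in_itv /= ?lexx ?(ltW b_lt_a) // => /andP[b_lt_t t_lt_a].
    exact: gap_der (lt_trans b_gt0 b_lt_t).
  have t_gt0 := lt_trans b_gt0 b_lt_t.
  have t01 : 0 < t <= 1 by rewrite t_gt0 (le_trans (ltW t_lt_a) a_le1).
  by have := kl_sqr_gap_derive_sign b01 t01; rewrite gap'E // pmulr_rge0 // subr_gt0.
Qed.

Lemma jensen_expR n (y : 'I_n -> R) :
  n%:R * expR (n%:R^-1 * \sum_(i < n) y i) <= \sum_(i < n) expR (y i).
Proof.
case: n y => [|n] y; first by rewrite mul0r big_ord0.
set m := n.+1%:R^-1 * \sum_(i < n.+1) y i.
have tangent i : expR m * (1 + (y i - m)) <= expR (y i).
  by rewrite -[in leRHS](subrK m (y i)) expRD mulrC ler_wpM2r ?expR_ge0 ?expR_ge1Dx.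
apply: le_trans (ler_sum _ (fun i _ => tangent i)).
rewrite -mulr_sumr !big_split /= sumrN !sumr_const card_ord.
rewrite -mulr_natl -[m *+ _]mulr_natl.
by rewrite /m mulrA mulfV ?pnatr_eq0 // mul1r subrr addr0 mulr1 mulrC.
Qed.

Definition tanh (t : R) := (expR t - expR (- t)) / (expR t + expR (- t)).

Lemma is_derive_logcosh (t : R) : is_derive t 1 logcosh (tanh t).
Proof.
have c_gt0 : 0 < (expR t + expR (- t)) / 2 by rewrite divr_gt0 ?addr_gt0 ?expR_gt0.
have c_der : is_derive t 1 (fun s : R => (expR s + expR (- s)) / 2) _ :=
  is_deriveM (is_deriveD (is_derive_expR t) (is_derive_expR_comp (is_deriveNid t 1)))
    (is_derive_cst (2^-1 : R) t 1).
apply: is_derive_eq (is_derive_ln_comp c_der c_gt0) _.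
rewrite scaler0 add0r /GRing.scale /= mulrN1 /tanh.
by field; rewrite gt_eqF ?addr_gt0 ?expR_gt0.
Qed.

Lemma tanh_sqr (t : R) : tanh t ^+ 2 = 1 - expR (- (2 * logcosh t)).
Proof.
have c_gt0 : 0 < (expR t + expR (- t)) / 2 by rewrite divr_gt0 ?addr_gt0 ?expR_gt0.
rewrite /logcosh expRN expRM_natl lnK ?posrE // /tanh expRN.
have et_gt0 := expR_gt0 t.
by field; rewrite gt_eqF //= gt_eqF // addr_gt0 ?mulr_gt0.
Qed.

End RealInequalities.

Section MeanLosses.
Context {R : realType} {p n : nat} (z : 'rV[R]_p -> 'rV[R]_n) (zs : 'rV[R]_n).
Context (th : 'rV[R]_p).
Hypothesis z_diff : differentiable z th.

Lemma grad_mean_loss (phi phi' : R -> R) :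
  (forall t : R, is_derive t 1 phi (phi' t)) ->
  grad (fun y => n%:R^-1 * \sum_(a < n) phi (z y 0 a - zs 0 a)) th
  = (n%:R^-1 *: \row_a phi' (z th 0 a - zs 0 a)) *m ('J z th)^T.
Proof.
move=> phi_der; apply: grad_through_logits => v.
have term_der a : is_derive th v (fun y => phi (z y 0 a - zs 0 a))
    (phi' (z th 0 a - zs 0 a) * (v *m 'J z th) 0 a).
  apply: (is_derive_comp_real (f := fun y => z y 0 a - zs 0 a)) (phi_der _).
  exact: is_derive_eq
    (is_deriveB (is_derive_logit z_diff v a) (is_derive_cst _ _ _)) (subr0 _).
apply: is_derive_eq (is_deriveZ n%:R^-1 (is_derive_sum_fun term_der)) _.
by rewrite /GRing.scale /= mulr_sumr; apply: eq_bigr => a _; rewrite !mxE mulrA.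
Qed.

Lemma grad_L_MSE : grad (L_MSE z zs) th
  = (n%:R^-1 *: \row_a (2 * (z th 0 a - zs 0 a))) *m ('J z th)^T.
Proof.
apply: (@grad_mean_loss (fun x => x ^+ 2)) => t.
apply: is_derive_eq (is_deriveX 2 (is_derive_id t 1)) _.
by rewrite expr1 /GRing.scale /= mulr1.
Qed.

Lemma grad_L_LCH : grad (L_LCH z zs) th
  = (n%:R^-1 *: \row_a tanh (z th 0 a - zs 0 a)) *m ('J z th)^T.
Proof. exact: grad_mean_loss is_derive_logcosh. Qed.

Lemma norm_logit_grad_MSE :
  euclid_norm (n%:R^-1 *: \row_a (2 * (z th 0 a - zs 0 a)))
  = 2 / n%:R * Num.sqrt (n%:R * L_MSE z zs th).
Proof.
rewrite euclid_normZ ger0_norm ?invr_ge0 // mulrC euclid_normE.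
have [n0|n_gt0] := posnP n.
  have -> : n%:R^-1 = 0 :> R by rewrite n0 invr0.
  by rewrite !(mulr0, mul0r).
rewrite /L_MSE mulrA mulfV ?pnatr_eq0 -?lt0n // mul1r /sqnorm.
under eq_bigr do rewrite mxE exprMn.
by rewrite -mulr_sumr sqrtrM ?sqr_ge0 // sqrtr_sqr ger0_norm // mulrAC.
Qed.

Lemma norm_logit_grad_LCH :
  euclid_norm (n%:R^-1 *: \row_a tanh (z th 0 a - zs 0 a))
  <= n%:R^-1 * Num.sqrt (n%:R * (1 - expR (- (2 * L_LCH z zs th)))).
Proof.
rewrite euclid_normZ ger0_norm ?invr_ge0 // ler_wpM2l ?invr_ge0 // euclid_normE.
apply: ler_wsqrtr.
pose y a := - (2 * logcosh (z th 0 a - zs 0 a)).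
have := jensen_expR y.
have -> : n%:R^-1 * \sum_(a < n) y a = - (2 * L_LCH z zs th).
  by rewrite /y /L_LCH sumrN -mulr_sumr; ring.
have -> : sqnorm (\row_a tanh (z th 0 a - zs 0 a)) = n%:R - \sum_(a < n) expR (y a).
  rewrite /sqnorm -[n in n%:R]card_ord -sumr_const -sumrB.
  by apply: eq_bigr => a _; rewrite mxE tanh_sqr.
lra.
Qed.

End MeanLosses.

Section Softmax.
Context {R : realType} {n : nat}.
Implicit Types w : 'rV[R]_n.

Lemma sumr_expR_gt0 w : (0 < n)%N -> 0 < \sum_(b < n) expR (w 0 b).
Proof.
move=> n_gt0; rewrite (bigD1 (Ordinal n_gt0)) //= ltr_pwDl ?expR_gt0 //.
by apply: sumr_ge0 => i _; exact: expR_ge0.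
Qed.

Lemma softmax_gt0 w a : 0 < softmax w a.
Proof.
by rewrite divr_gt0 ?expR_gt0 ?sumr_expR_gt0 // (leq_ltn_trans _ (ltn_ord a)).
Qed.

Lemma sum_softmax w : (0 < n)%N -> \sum_(a < n) softmax w a = 1.
Proof. by move=> n_gt0; rewrite -mulr_suml mulfV // gt_eqF ?sumr_expR_gt0. Qed.

Lemma softmax_le1 w a : softmax w a <= 1.
Proof.
rewrite -(sum_softmax w (leq_ltn_trans (leq0n a) (ltn_ord a))) (bigD1 a) //= lerDl.
by apply: sumr_ge0 => i _; exact: ltW (softmax_gt0 w i).
Qed.

Lemma ln_softmax w a : (0 < n)%N ->
  ln (softmax w a) = w 0 a - ln (\sum_(b < n) expR (w 0 b)).
Proof. by move=> n_gt0; rewrite ln_div ?posrE ?expR_gt0 ?sumr_expR_gt0 // expRK. Qed.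

End Softmax.

Section KLDivergence.
Context {R : realType} {p n : nat} (z : 'rV[R]_p -> 'rV[R]_n) (zs : 'rV[R]_n).
Hypothesis n_gt0 : (0 < n)%N.

Lemma L_KLDE y : L_KLD z zs y =
  \sum_(a < n) softmax zs a * ln (softmax zs a) - \sum_(a < n) softmax zs a * z y 0 a
  + ln (\sum_(b < n) expR (z y 0 b)).
Proof.
rewrite /L_KLD -[ln (\sum_b _)]mul1r -(sum_softmax zs n_gt0) mulr_suml.
rewrite -sumrB -big_split /=.
apply: eq_bigr => a _.
by rewrite ln_div ?posrE ?softmax_gt0 // (ln_softmax (z y) _ n_gt0); ring.
Qed.

Lemma is_derive_L_KLD th v : differentiable z th ->
  is_derive th v (L_KLD z zs)
    (\sum_(a < n) (softmax (z th) a - softmax zs a) * (v *m 'J z th) 0 a).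
Proof.
move=> z_diff; set Jv := v *m 'J z th.
have lin_der : is_derive th v (fun y => \sum_(a < n) softmax zs a * z y 0 a)
    (\sum_(a < n) softmax zs a * Jv 0 a).
  by apply: is_derive_sum_fun => a; exact: is_deriveZ (is_derive_logit z_diff v a).
have lse_der := is_derive_ln_comp
  (is_derive_sum_fun (fun b => is_derive_expR_comp (is_derive_logit z_diff v b)))
  (sumr_expR_gt0 (z th) n_gt0).
have -> : L_KLD z zs = fun y => \sum_(a < n) softmax zs a * ln (softmax zs a)
    - \sum_(a < n) softmax zs a * z y 0 a + ln (\sum_(b < n) expR (z y 0 b)).
  by apply: funext => y; exact: L_KLDE.
apply: is_derive_eq (is_deriveD (is_deriveB (is_derive_cst _ th v) lin_der) lse_der) _.
rewrite sub0r mulr_sumr -sumrN -big_split /=; apply: eq_bigr => a _.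
by rewrite /softmax; ring.
Qed.

End KLDivergence.

Section KLDivergenceBounds.
Context {R : realType}.

Lemma grad_L_KLD p n (z : 'rV[R]_p -> 'rV[R]_n) (zs : 'rV[R]_n) th :
  differentiable z th ->
  grad (L_KLD z zs) th = (\row_a (softmax (z th) a - softmax zs a)) *m ('J z th)^T.
Proof.
case: n z zs => [|n] z zs z_diff; last first.
  apply: grad_through_logits => v; under eq_bigr do rewrite mxE.
  exact: is_derive_L_KLD.
rewrite [X in _ = X *m _]thinmx0; apply: grad_through_logits => v; rewrite big_ord0.
have -> : L_KLD z zs = cst 0 by apply: funext => y; rewrite /L_KLD big_ord0.
exact: is_derive_cst.
Qed.

Lemma norm_logit_grad_KLD p n (z : 'rV[R]_p -> 'rV[R]_n) (zs : 'rV[R]_n) th :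
  euclid_norm (\row_a (softmax (z th) a - softmax zs a))
  <= Num.sqrt (2 * L_KLD z zs th).
Proof.
case: n z zs => [|n] z zs.
  by rewrite [X in euclid_norm X]thinmx0 euclid_normE sqnorm0 sqrtr0 sqrtr_ge0.
rewrite euclid_normE ler_wsqrtr // /sqnorm; under eq_bigr do rewrite mxE.
have term_le a : (softmax (z th) a - softmax zs a) ^+ 2 <=
    2 * (softmax zs a * ln (softmax zs a / softmax (z th) a) - softmax zs a
         + softmax (z th) a).
  rewrite -sqrrN opprB.
  have := pinsker_term_le (a := softmax zs a) (b := softmax (z th) a).
  by rewrite !softmax_gt0 !softmax_le1 => /(_ erefl erefl); lra.
apply: le_trans (ler_sum _ (fun a _ => term_le a)) _.
by rewrite -mulr_sumr !big_split /= sumrN !sum_softmax // subrK.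
Qed.

End KLDivergenceBounds.

Unset Implicit Arguments.

Theorem proposition4p7 (R : realType) (n p : nat)
  (z : 'rV[R]_p -> 'rV[R]_n) (zold A : 'rV[R]_n) (beta : R) (th : 'rV[R]_p) :
  (forall t : 'rV[R]_p, differentiable z t) ->
  0 < beta ->
  let zs := zstar zold A beta in
  let s := sigma_max ('J z th) in
  [/\ euclid_norm (grad (L_MSE z zs) th)
        <= 2 / n%:R * s * Num.sqrt (n%:R * L_MSE z zs th),
      euclid_norm (grad (L_LCH z zs) th)
        <= n%:R^-1 * s * Num.sqrt (n%:R * (1 - expR (- (2 * L_LCH z zs th))))
    & euclid_norm (grad (L_KLD z zs) th)
        <= s * Num.sqrt (2 * L_KLD z zs th)].
Proof.
(* The bounds hold for arbitrary target logits. *)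
move=> z_diff _ zs s; split.
- rewrite [2 / _ * s]mulrC -mulrA.
  apply: euclid_norm_grad_le (grad_L_MSE zs (z_diff th)) _.
  by rewrite norm_logit_grad_MSE.
- rewrite [_^-1 * s]mulrC -mulrA.
  exact: euclid_norm_grad_le (grad_L_LCH zs (z_diff th)) (norm_logit_grad_LCH z zs th).
- exact: euclid_norm_grad_le (grad_L_KLD zs (z_diff th)) (norm_logit_grad_KLD z zs th).
Qed.
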